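(* In the setting of the context, fix two distinct exposures $d_k\neq d_l$. Let $\widehat{\tau_{HT}}(d_k,d_l)=\frac1N\big[\widehat{y^T_{HT}}(d_k)-\widehat{y^T_{HT}}(d_l)\big]$ and define $$\widehat{\mathrm{Var}}[\widehat{\tau_{HT}}(d_k,d_l)]=\frac{1}{N^2}\Big\{\widehat{\mathrm{Var}}[\widehat{y^T_{HT}}(d_k)]+\widehat{A_2}(d_k)+\widehat{\mathrm{Var}}[\widehat{y^T_{HT}}(d_l)]+\widehat{A_2}(d_l)-2\,\widehat{\mathrm{Cov}}_A[\widehat{y^T_{HT}}(d_k),\widehat{y^T_{HT}}(d_l)]\Big\},$$ with the component estimators defined in the context. Then $$\mathrm{E}\big[\widehat{\mathrm{Var}}[\widehat{\tau_{HT}}(d_k,d_l)]\big]\ \ge\ \mathrm{Var}\big[\widehat{\tau_{HT}}(d_k,d_l)\big].$$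
   Context: A finite population $U$ of units $i=1,\dots,N$. A random treatment assignment vector $\mathbf{Z}$ takes values in $\Omega=\{\mathbf{z}\in\{1,\dots,M\}^N:p_{\mathbf{z}}>0\}$ with known probabilities $p_{\mathbf{z}}$. An exposure mapping $f:\Omega\times\Theta\to\Delta=\{d_1,\dots,d_K\}$ with unit traits $\theta_i$ gives exposures $D_i=f(\mathbf{Z},\theta_i)$. Write $\pi_i(d)=\Pr(D_i=d)$, $\pi_{ij}(d,d')=\Pr(D_i=d,D_j=d')$, $\pi_{ij}(d)=\pi_{ij}(d,d)$ (so $\pi_{ii}(d)=\pi_i(d)$ and $\pi_{ii}(d,d')=0$ for $d\ne d'$); assume $0<\pi_i(d_k)<1$ for all $i,k$. Potential outcomes $y_i(d)$ are fixed reals; the observed outcome is $y_i(D_i)$. Convention: $0/0=0$. Definitions: $\widehat{y^T_{HT}}(d)=\sum_i \mathbf{I}(D_i=d)y_i(d)/\pi_i(d)$; $\widehat{\mathrm{Var}}[\widehat{y^T_{HT}}(d)]=\sum_{i\in U}\mathbf{I}(D_i=d)[1-\pi_i(d)]\big[y_i(d)/\pi_i(d)\big]^2+\sum_{i\in U}\sum_{j\in U\setminus\{i\}}\mathbf{I}(D_i=d)\mathbf{I}(D_j=d)\frac{\pi_{ij}(d)-\pi_i(d)\pi_j(d)}{\pi_{ij}(d)}\frac{y_i(d)}{\pi_i(d)}\frac{y_j(d)}{\pi_j(d)}$; $\widehat{A_2}(d)=\sum_{i\in U}\sum_{j\in U\setminus\{i\}:\ \pi_{ij}(d)=0}\Big[\frac{\mathbf{I}(D_i=d)y_i(d)^2}{2\pi_i(d)}+\frac{\mathbf{I}(D_j=d)y_j(d)^2}{2\pi_j(d)}\Big]$;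 $\widehat{\mathrm{Cov}}_A[\widehat{y^T_{HT}}(d_k),\widehat{y^T_{HT}}(d_l)]=\sum_{i\in U}\sum_{j\in U\setminus\{i\}:\pi_{ij}(d_k,d_l)>0}\frac{\mathbf{I}(D_i=d_k)\mathbf{I}(D_j=d_l)}{\pi_{ij}(d_k,d_l)}\frac{y_i(d_k)}{\pi_i(d_k)}\frac{y_j(d_l)}{\pi_j(d_l)}[\pi_{ij}(d_k,d_l)-\pi_i(d_k)\pi_j(d_l)]-\sum_{i\in U}\sum_{j\in U:\pi_{ij}(d_k,d_l)=0}\Big[\frac{\mathbf{I}(D_i=d_k)y_i(d_k)^2}{2\pi_i(d_k)}+\frac{\mathbf{I}(D_j=d_l)y_j(d_l)^2}{2\pi_j(d_l)}\Big]$. Expectations and variances are over the randomization distribution of $\mathbf{Z}$. *)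

From mathcomp Require Import all_boot all_order all_algebra.
Set Implicit Arguments. Unset Strict Implicit. Unset Printing Implicit Defensive.
Import Order.TTheory GRing.Theory Num.Theory.
Local Open Scope ring_scope.

Section Design.
Variables (R : realFieldType) (Om : finType) (N : nat) (Delta : finType).
(* p : randomization probabilities of assignment vectors (p z >= 0, summing to 1) *)
Variable p : Om -> R.
(* D z i : exposure of unit i under assignment z *)
Variable D : Om -> 'I_N -> Delta.
(* y i d : potential outcome of unit i under exposure d *)
Variable y : 'I_N -> Delta -> R.

Definition expect (X : Om -> R) : R := \sum_(z : Om) p z * X z.
Definition variance (X : Om -> R) : R := expect (fun z => (X z - expect X) ^+ 2).

Definition ind (b : bool) : R := if b then 1 else 0.

Definition pi1 (i : 'I_N) (d : Delta) : R := expect (fun z => ind (D z i == d)).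
Definition pi2 (i j : 'I_N) (d d' : Delta) : R :=
  expect (fun z => ind ((D z i == d) && (D z j == d'))).

Definition yHT (d : Delta) (z : Om) : R :=
  \sum_(i < N) ind (D z i == d) * y i d / pi1 i d.

Definition VarHat (d : Delta) (z : Om) : R :=
  \sum_(i < N) ind (D z i == d) * (1 - pi1 i d) * (y i d / pi1 i d) ^+ 2
  + \sum_(i < N) \sum_(j < N | j != i)
      ind (D z i == d) * ind (D z j == d)
      * ((pi2 i j d d - pi1 i d * pi1 j d) / pi2 i j d d)
      * (y i d / pi1 i d) * (y j d / pi1 j d).

Definition A2Hat (d : Delta) (z : Om) : R :=
  \sum_(i < N) \sum_(j < N | (j != i) && (pi2 i j d d == 0))
    (ind (D z i == d) * y i d ^+ 2 / (2 * pi1 i d)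
     + ind (D z j == d) * y j d ^+ 2 / (2 * pi1 j d)).

Definition CovAHat (dk dl : Delta) (z : Om) : R :=
  \sum_(i < N) \sum_(j < N | (j != i) && (0 < pi2 i j dk dl))
    (ind (D z i == dk) * ind (D z j == dl) / pi2 i j dk dl
     * (y i dk / pi1 i dk) * (y j dl / pi1 j dl)
     * (pi2 i j dk dl - pi1 i dk * pi1 j dl))
  - \sum_(i < N) \sum_(j < N | pi2 i j dk dl == 0)
    (ind (D z i == dk) * y i dk ^+ 2 / (2 * pi1 i dk)
     + ind (D z j == dl) * y j dl ^+ 2 / (2 * pi1 j dl)).

Definition tauHT (dk dl : Delta) (z : Om) : R :=
  (N%:R)^-1 * (yHT dk z - yHT dl z).

Definition VarTauHat (dk dl : Delta) (z : Om) : R :=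
  (N%:R ^+ 2)^-1 * (VarHat dk z + A2Hat dk z + VarHat dl z + A2Hat dl z
                     - 2 * CovAHat dk dl z).
End Design.

From mathcomp Require Import all_boot all_order all_algebra.
From mathcomp Require Import ring lra.
Import Order.TTheory GRing.Theory Num.Theory.
Local Open Scope ring_scope.
Set Implicit Arguments. Unset Strict Implicit. Unset Printing Implicit Defensive.

(* Each [yHT d] is linear in exposure indicators, so Cov[yHT d, yHT d'] is the
   double sum over (i, j) of (pi_ij - pi_i pi_j) (y_i / pi_i) (y_j / pi_j).  In
   expectation the variance and covariance estimators reproduce exactly the
   terms with pi_ij > 0 (and the diagonal).  The missing terms, where
   pi_ij = 0, equal -y_i y_j, and Young's inequality bounds +-y_i y_j by
   (y_i^2 + y_j^2) / 2, which is the expected summand of the A2 and CovA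
   corrections.  Hence E[Var + A2] >= Var and E[CovA] <= Cov, and the bound for
   Var[yHT dk - yHT dl] follows. *)

Section Expectation.
Variables (R : realFieldType) (Om : finType) (p : Om -> R).
Implicit Types (X Y : Om -> R) (c : R).

Lemma eq_expect X Y : X =1 Y -> expect p X = expect p Y.
Proof. by move=> eqXY; apply: eq_bigr => z _; rewrite eqXY. Qed.

Lemma expectD X Y : expect p (fun z => X z + Y z) = expect p X + expect p Y.
Proof. by rewrite /expect -big_split; apply: eq_bigr => z _; rewrite mulrDr. Qed.

Lemma expectB X Y : expect p (fun z => X z - Y z) = expect p X - expect p Y.
Proof. by rewrite /expect -sumrB; apply: eq_bigr => z _; rewrite mulrBr. Qed.

Lemma expectMl c X : expect p (fun z => c * X z) = c * expect p X.
Proof. by rewrite /expect mulr_sumr; apply: eq_bigr => z _; rewrite mulrCA. Qed.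

Lemma expectMr c X : expect p (fun z => X z * c) = expect p X * c.
Proof. by rewrite /expect mulr_suml; apply: eq_bigr => z _; rewrite mulrA. Qed.

Lemma expect_sum (I : Type) (r : seq I) (P : pred I) (F : I -> Om -> R) :
  expect p (fun z => \sum_(i <- r | P i) F i z) = \sum_(i <- r | P i) expect p (F i).
Proof. by rewrite /expect; under eq_bigr do rewrite mulr_sumr; exact: exchange_big. Qed.

Definition covariance X Y := expect p (fun z => X z * Y z) - expect p X * expect p Y.

Hypothesis p_sum1 : \sum_z p z = 1.

Lemma expect_cst c : expect p (fun _ => c) = c.
Proof. by rewrite /expect -mulr_suml p_sum1 mul1r. Qed.

Lemma variance_covariance X : variance p X = covariance X X.
Proof.
rewrite /variance /covariance; set m := expect p X.
rewrite (@eq_expect _ (fun z => X z * X z - 2 * m * X z + m ^+ 2)); last by move=> z; ring.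
by rewrite expectD expectB expectMl expect_cst -/m; ring.
Qed.

Lemma variance_scaled_diff c X Y :
  variance p (fun z => c * (X z - Y z))
  = c ^+ 2 * (covariance X X + covariance Y Y - 2 * covariance X Y).
Proof.
rewrite variance_covariance /covariance.
rewrite (@eq_expect _ (fun z => c ^+ 2 * (X z * X z) + c ^+ 2 * (Y z * Y z)
                                - 2 * c ^+ 2 * (X z * Y z))); last by move=> z; ring.
by rewrite expectB expectD !expectMl expectB; ring.
Qed.

End Expectation.

Section HorvitzThompson.
Variables (R : realFieldType) (Om : finType) (N : nat) (Delta : finType).
Variables (p : Om -> R) (D : Om -> 'I_N -> Delta) (y : 'I_N -> Delta -> R).
Implicit Types (i j : 'I_N) (d : Delta).

Lemma expect_ind_pair i j d d' :
  expect p (fun z => ind R (D z i == d) * ind R (D z j == d')) = pi2 p D i j d d'.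
Proof. by apply: eq_expect => z; rewrite /ind; do 2 case: eqP; rewrite ?mulr1 ?mulr0. Qed.

Lemma pi2_diag i d : pi2 p D i i d d = pi1 p D i d.
Proof. by apply: eq_expect => z; rewrite andbb. Qed.

Lemma pi2_diag_neq i d d' : d != d' -> pi2 p D i i d d' = 0.
Proof.
move=> dd'; rewrite /pi2 (@eq_expect _ _ _ _ (fun _ => 0)) => [|z].
  by rewrite /expect big1 // => z _; rewrite mulr0.
by case: eqP => // ->; rewrite (negbTE dd').
Qed.

Hypothesis p_ge0 : forall z, 0 <= p z.

Lemma pi2_ge0 i j d d' : 0 <= pi2 p D i j d d'.
Proof. by apply: sumr_ge0 => z _; rewrite mulr_ge0 // /ind; case: ifP. Qed.

Definition ht_cov_term i j d d' :=
  (pi2 p D i j d d' - pi1 p D i d * pi1 p D j d')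
  * (y i d / pi1 p D i d) * (y j d' / pi1 p D j d').

Lemma covariance_yHT d d' :
  covariance p (yHT p D y d) (yHT p D y d') = \sum_i \sum_j ht_cov_term i j d d'.
Proof.
rewrite /covariance (@eq_expect _ _ _ _ (fun z => \sum_i \sum_j
   ind R (D z i == d) * ind R (D z j == d')
   * ((y i d / pi1 p D i d) * (y j d' / pi1 p D j d')))); last first.
  move=> z; rewrite /yHT mulr_suml; apply: eq_bigr => i _.
  by rewrite mulr_sumr; apply: eq_bigr => j _; ring.
rewrite /yHT !expect_sum mulr_suml -sumrB; apply: eq_bigr => i _.
rewrite expect_sum mulr_sumr -sumrB; apply: eq_bigr => j _.
rewrite expectMr expect_ind_pair !expectMr -/(pi1 p D i d) -/(pi1 p D j d').
by rewrite /ht_cov_term; ring.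
Qed.

Hypothesis pi1_neq0 : forall i d, pi1 p D i d != 0.

Lemma ht_cov_term_pi2_eq0 i j d d' :
  pi2 p D i j d d' = 0 -> ht_cov_term i j d d' = - (y i d * y j d').
Proof.
move=> q0; rewrite /ht_cov_term q0.
by field; rewrite !pi1_neq0.
Qed.

Lemma expect_half_sqr i j d d' :
  expect p (fun z => ind R (D z i == d) * y i d ^+ 2 / (2 * pi1 p D i d)
                     + ind R (D z j == d') * y j d' ^+ 2 / (2 * pi1 p D j d'))
  = (y i d ^+ 2 + y j d' ^+ 2) / 2.
Proof.
rewrite expectD !expectMr -/(pi1 p D i d) -/(pi1 p D j d').
by field; rewrite !pi1_neq0.
Qed.

Lemma expect_VarHat d :
  expect p (VarHat p D y d)
  = \sum_i \sum_(j | (j == i) || (pi2 p D i j d d != 0)) ht_cov_term i j d d.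
Proof.
rewrite /VarHat expectD !expect_sum -big_split /=; apply: eq_bigr => i _.
rewrite (bigD1 i) ?eqxx //=; congr (_ + _).
  rewrite !expectMr -/(pi1 p D i d) /ht_cov_term pi2_diag.
  by field; rewrite pi1_neq0.
rewrite expect_sum (bigID (fun j => pi2 p D i j d d == 0)) /=.
rewrite big1 ?add0r => [|j /andP[_ /eqP q0]]; last first.
  by rewrite !expectMr expect_ind_pair q0 !mul0r.
apply: eq_big => [| j /andP[_ q_neq0]]; first by move=> j; case: (j == i); rewrite ?andbT.
rewrite !expectMr expect_ind_pair /ht_cov_term.
by field; rewrite q_neq0 !pi1_neq0.
Qed.

Lemma expect_A2Hat d :
  expect p (A2Hat p D y d)
  = \sum_i \sum_(j | (j != i) && (pi2 p D i j d d == 0)) (y i d ^+ 2 + y j d ^+ 2) / 2.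
Proof.
rewrite /A2Hat expect_sum; apply: eq_bigr => i _.
by rewrite expect_sum; apply: eq_bigr => j _; exact: expect_half_sqr.
Qed.

Lemma expect_CovAHat dk dl :
  expect p (CovAHat p D y dk dl)
  = \sum_i \sum_(j | (j != i) && (0 < pi2 p D i j dk dl)) ht_cov_term i j dk dl
    - \sum_i \sum_(j | pi2 p D i j dk dl == 0) (y i dk ^+ 2 + y j dl ^+ 2) / 2.
Proof.
rewrite /CovAHat expectB !expect_sum; congr (_ - _); apply: eq_bigr => i _.
  rewrite expect_sum; apply: eq_bigr => j /andP[_ q_gt0].
  rewrite !expectMr expect_ind_pair /ht_cov_term.
  by field; rewrite !pi1_neq0 lt0r_neq0.
by rewrite expect_sum; apply: eq_bigr => j _; exact: expect_half_sqr.
Qed.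

Lemma covariance_yHT_self_le d :
  covariance p (yHT p D y d) (yHT p D y d)
  <= expect p (VarHat p D y d) + expect p (A2Hat p D y d).
Proof.
rewrite covariance_yHT expect_VarHat expect_A2Hat -big_split /=.
apply: ler_sum => i _.
rewrite (bigID (fun j => (j == i) || (pi2 p D i j d d != 0))) /= lerD2l.
rewrite (eq_bigl (fun j => (j != i) && (pi2 p D i j d d == 0))) => [|j]; last first.
  by rewrite negb_or negbK.
apply: ler_sum => j /andP[_ /eqP q0]; rewrite ht_cov_term_pi2_eq0 //.
by have := sqr_ge0 (y i d + y j d); lra.
Qed.

Lemma expect_CovAHat_le dk dl :
  dk != dl -> expect p (CovAHat p D y dk dl) <= covariance p (yHT p D y dk) (yHT p D y dl).
Proof.
move=> dk_dl; rewrite covariance_yHT expect_CovAHat -sumrB; apply: ler_sum => i _.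
rewrite [leRHS](bigID (fun j => (j != i) && (0 < pi2 p D i j dk dl))) /= lerD2l.
rewrite [leRHS](eq_bigl (fun j => pi2 p D i j dk dl == 0)) => [|j]; last first.
  have [->|_] := eqVneq j i; first by rewrite pi2_diag_neq // eqxx.
  by rewrite lt0r pi2_ge0 andbT negbK.
rewrite -sumrN; apply: ler_sum => j /eqP q0; rewrite ht_cov_term_pi2_eq0 //.
by have := sqr_ge0 (y i dk - y j dl); lra.
Qed.

Lemma expect_VarTauHat dk dl :
  expect p (VarTauHat p D y dk dl)
  = (N%:R ^+ 2)^-1 * (expect p (VarHat p D y dk) + expect p (A2Hat p D y dk)
                      + expect p (VarHat p D y dl) + expect p (A2Hat p D y dl)
                      - 2 * expect p (CovAHat p D y dk dl)).
Proof.
(* Abstracting the estimators keeps [expectD] from unfolding their bodies. *)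
rewrite /VarTauHat; move: (CovAHat p D y dk dl) => C.
move: (VarHat p D y dk) (A2Hat p D y dk) (VarHat p D y dl) (A2Hat p D y dl) => Vk Ak Vl Al.
by rewrite expectMl expectB !expectD expectMl.
Qed.

End HorvitzThompson.

Theorem mainTheorem3 (R : realFieldType) (N M : nat) (Delta : finType)
  (p : {ffun 'I_N -> 'I_M} -> R)
  (Theta : Type) (f : {ffun 'I_N -> 'I_M} -> Theta -> Delta) (theta : 'I_N -> Theta)
  (y : 'I_N -> Delta -> R) (dk dl : Delta) :
  (forall z, 0 <= p z) -> \sum_z p z = 1 ->
  (forall i d, 0 < pi1 p (fun z i => f z (theta i)) i d < 1) ->
  dk != dl ->
  variance p (tauHT p (fun z i => f z (theta i)) y dk dl)
  <= expect p (VarTauHat p (fun z i => f z (theta i)) y dk dl).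
Proof.
move=> p_ge0 p_sum1 pi1_01 dk_dl; set D := fun z i => f z (theta i).
have pi1_neq0 i d : pi1 p D i d != 0 by case/andP: (pi1_01 i d) => /lt0r_neq0.
rewrite expect_VarTauHat /tauHT variance_scaled_diff // exprVn.
apply: ler_wpM2l; first by rewrite invr_ge0 exprn_ge0 ?ler0n.
have := covariance_yHT_self_le y pi1_neq0 dk; have := covariance_yHT_self_le y pi1_neq0 dl.
have := expect_CovAHat_le y p_ge0 pi1_neq0 dk_dl.
lra.
Qed.
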